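(* There is an infinite family of instances (temporal graphs $\mathcal G_n$ with parameters $T_{\max}$ and $\delta$ depending on $n$) such that, for every $k$, the witness complexity of $\mathcal G_n$ grows in $\Omega(|E(\mathcal G_n)|)$, with the implied constant independent of $k$.
   Context: A temporal graph $\mathcal G=(V,E,\lambda)$ with lifetime $T_{\max}$ consists of a finite undirected static graph $(V,E)$ and a labeling $\lambda:E\to\{1,\dots,T_{\max}\}$; edge $e$ is present only at time $\lambda(e)$. Infection model with parameter $\delta\in\mathbb N^+$: a set $S\subseteq V\times[0,T_{\max}]$ of at most $k$ seed infections is given; a seed $(u,t)$ makes $u$ infected at time $t$; otherwise a susceptible node $u$ becomes infected at time $t$ iff some neighbour $v$ infectious at time $t$ has $\lambda(uv)=t$ (exactly one infector recorded if several exist). A node infected at time $t$ is infectious at times $t+1,\dots,t+\delta$ and resistant afterwards. The infection log records triples $(u,v,t)$ ($u$ infected $v$ at time $t$; seeds as $(u,u,t)$); a log is consistent if produced by some infection chain. A witnessing schedule of length $a$ for $\mathcal G$ is a sequence $S_1,\dots,S_a$ of seed infection sets (each of size at most $k$) such that after performing these $a$ rounds, all edge labels of $\mathcal G$ are uniquely determined (among labelings of the known static graph $(V,E)$) by the infection logs of these rounds. The witness complexity of $\mathcal G$ is the length of a shortest witnessing schedule. *)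

From mathcomp Require Import all_boot.
Unset Printing Implicit Defensive.

(* A temporal graph: finite vertex type, static simple graph given by a
   symmetric irreflexive relation, lifetime Tmax, infectious period delta,
   and a labeling on 2-element vertex sets (edges). *)
Record tgraph := TGraph {
  tV : finType;
  tE : rel tV;
  tTmax : nat;
  tdelta : nat;
  tlam : {set tV} -> nat
}.

Definition edges {V : finType} (e : rel V) : {set {set V}} :=
  [set A : {set V} | [exists u, exists v, e u v && (A == [set u; v])]].

Definition valid_labeling {V : finType} (e : rel V) (Tmax : nat)
  (lam : {set V} -> nat) : Prop :=
  forall A, A \in edges (V:=V) e -> 1 <= lam A <= Tmax.

Definition valid_tgraph (G : tgraph) : Prop :=
  symmetric (tE G) /\ irreflexive (tE G) /\ 0 < tdelta G /\
  valid_labeling (V:=tV G) (tE G) (tTmax G) (tlam G).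

Notation seedset G := {set tV G * 'I_(tTmax G).+1} (only parsing).

(* a log: for each node, None (never infected) or Some (x, t):
   x infected it at time t (x = the node itself for a seed) *)
Definition ilog (V : finType) := V -> option (V * nat).

Section Infection.
Variables (V : finType) (e : rel V) (Tmax delta : nat).
Variables (lam : {set V} -> nat) (S : {set V * 'I_Tmax.+1}) (L : ilog V).

Definition seeded (u : V) (t : nat) : Prop :=
  exists s : 'I_Tmax.+1, (u, s) \in S /\ nat_of_ord s = t.

Definition infectious (v : V) (t : nat) : Prop :=
  exists x t0, L v = Some (x, t0) /\ t0 < t <= t0 + delta.

Definition reason (u : V) (t : nat) : Prop :=
  seeded u t \/ exists v, e u v /\ lam [set u; v] = t /\ infectious v t.

(* L is an infection log produced by the process on labeling lam with
   seeds S: every node is infected at the first time it has a cause,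
   with one (arbitrary) valid infector recorded. *)
Definition produces : Prop :=
  forall u, match L u with
  | Some (x, t) =>
      ((x = u /\ seeded u t) \/
       (x <> u /\ e u x /\ lam [set u; x] = t /\ infectious x t)) /\
      (forall t', t' < t -> ~ reason u t')
  | None => forall t, ~ reason u t
  end.
End Infection.
Arguments seeded {V Tmax}. Arguments infectious {V} delta L v t. Arguments reason {V} e {Tmax} delta lam S L u t. Arguments produces {V} e {Tmax} delta lam S L.

Definition witnessing (G : tgraph) (k : nat) (sched : seq (seedset G)) : Prop :=
  (forall S, S \in sched -> #|S| <= k) /\
  forall logs : seq (ilog (tV G)), size logs = size sched ->
    (forall i, i < size sched ->
       produces (tE G) (tdelta G) (tlam G) (nth set0 sched i)
                (nth (fun _ => None) logs i)) ->
    forall lam' : {set tV G} -> nat,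
      valid_labeling (V:=tV G) (tE G) (tTmax G) lam' ->
      (forall i, i < size sched ->
         produces (tE G) (tdelta G) lam' (nth set0 sched i)
                  (nth (fun _ => None) logs i)) ->
      forall A, A \in edges (V:=tV G) (tE G) -> lam' A = tlam G A.

Definition witness_complexity (G : tgraph) (k m : nat) : Prop :=
  (exists sched, witnessing G k sched /\ size sched = m) /\
  (forall sched, witnessing G k sched -> m <= size sched).

From mathcomp Require Import all_boot zify.
From Stdlib Require Import Classical.

Set Implicit Arguments.
Unset Strict Implicit.

(* Take the star with centre 0 and leaves 1, ..., n, where the edge to leaf w
   carries label w.  Seeding only the centre at time w - 1 makes it infect
   leaf w at time w, which pins down the label of that edge, so n rounds
   suffice.  Conversely, the log of one round mentions, at the centre, at most
   delta + 1 leaves: its infector and the leaves it could infect while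
   infectious.  After m rounds with 2 delta m < n some leaf w is never
   mentioned, and relabelling the edge to w with one of the n + 1 available
   times at which neither endpoint is ever infectious leaves every log
   consistent.  Hence n / (2 delta) <= witness complexity <= n, whatever the
   seed budget k. *)

Definition infectious_times (V : Type) (delta : nat) (p : option (V * nat)) : seq nat :=
  if p is Some (_, t0) then iota t0.+1 delta else [::].

Lemma size_infectious_times (V : Type) delta (p : option (V * nat)) :
  size (infectious_times delta p) <= delta.
Proof. by case: p => [[x t0]|] //=; rewrite size_iota. Qed.

Lemma infectiousP (V : finType) delta (L : ilog V) v t :
  infectious delta L v t <-> t \in infectious_times delta (L v).
Proof.
rewrite /infectious /infectious_times; case: (L v) => [[x t0]|]; split => //.
- by move=> [y [t1 [[_ <-] /andP [lt le]]]]; rewrite mem_iota; lia.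
- by rewrite mem_iota => /andP [lt le]; exists x, t0; split => //; apply/andP; lia.
- by move=> [y [t1 []]].
Qed.

Definition relabel (V : finType) (lam : {set V} -> nat) (A : {set V}) (l : nat) :
    {set V} -> nat :=
  fun B => if B == A then l else lam B.

Lemma relabel_valid (V : finType) (e : rel V) Tmax (lam : {set V} -> nat) A l :
  valid_labeling e Tmax lam -> 0 < l <= Tmax -> valid_labeling e Tmax (relabel lam A l).
Proof. by move=> valid l_range B; rewrite /relabel; case: eqP => // _; apply: valid. Qed.

Section Production.
Variables (V : finType) (e : rel V) (Tmax delta : nat) (S : {set V * 'I_Tmax.+1}).

Lemma produces_infected_by (lam : {set V} -> nat) (L : ilog V) u x t :
  produces e delta lam S L -> L u = Some (x, t) -> x <> u ->
  [/\ e u x, lam [set u; x] = t & infectious delta L x t].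
Proof.
move=> /(_ u) + Lu xu; rewrite Lu => [[[[//]|[_ [eux [lux inf]]]] _]].
by split.
Qed.

Lemma produces_unseeded (lam : {set V} -> nat) (L : ilog V) u x t :
  produces e delta lam S L -> L u = Some (x, t) -> ~ seeded S u t ->
  [/\ x <> u, e u x, lam [set u; x] = t & infectious delta L x t].
Proof.
move=> P Lu NS; have xu : x <> u.
  by move: (P u); rewrite Lu => [[[[_ Su] | [xu _]] _]].
by have [] := produces_infected_by P Lu xu.
Qed.

Lemma produces_transfer (lam lam' : {set V} -> nat) (L : ilog V) :
  produces e delta lam S L ->
  (forall u x t, L u = Some (x, t) -> x <> u -> e u x -> lam [set u; x] = t ->
     infectious delta L x t -> lam' [set u; x] = t) ->
  (forall u v t, e u v -> lam' [set u; v] = t -> infectious delta L v t ->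
     lam [set u; v] = t) ->
  produces e delta lam' S L.
Proof.
move=> P recorded no_new u.
have R t : reason e delta lam' S L u t -> reason e delta lam S L u t.
  case=> [Hs|[v [euv [lv inf]]]]; first by left.
  by right; exists v; split => //; split => //; apply: no_new.
move: (P u); case Lu: (L u) => [[x t]|]; last by move=> N t /R /N.
move=> [C N]; split; last by move=> t' lt /R; apply: N.
case: C => [C|[xu [eux [lx inf]]]]; first by left.
by right; split => //; split => //; split => //; apply: (recorded u x t).
Qed.

Lemma produces_relabel (lam : {set V} -> nat) (L : ilog V) a b l :
  produces e delta lam S L ->
  (forall t, L a <> Some (b, t)) -> (forall t, L b <> Some (a, t)) ->
  ~ infectious delta L a l -> ~ infectious delta L b l ->
  produces e delta (relabel lam [set a; b] l) S L.
Proof.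
move=> P Na Nb Ia Ib; apply: (produces_transfer P) => [u x t Lu xu _ lux _|u v t _].
  rewrite /relabel; case: eqP => // E; exfalso.
  have /set2P [ua|ub] : u \in [set a; b] by rewrite -E set21.
  - have /set2P [xa|xb] : x \in [set a; b] by rewrite -E set22.
    + by apply: xu; rewrite xa ua.
    + by apply: (Na t); rewrite -ua -xb.
  - have /set2P [xa|xb] : x \in [set a; b] by rewrite -E set22.
    + by apply: (Nb t); rewrite -ub -xa.
    + by apply: xu; rewrite xb ub.
rewrite /relabel; case: eqP => // E <- inf; exfalso.
have : v \in [set a; b] by rewrite -E set22.
by case/set2P => va; [apply: Ia | apply: Ib]; rewrite -va.
Qed.

End Production.

Section InfectionLog.
Variables (V : finType) (e : rel V) (Tmax delta : nat) (lam : {set V} -> nat).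
Variable S : {set V * 'I_Tmax.+1}.
Hypothesis e_irr : irreflexive e.
Hypothesis lam_le_Tmax : forall u v, e u v -> lam [set u; v] <= Tmax.

Definition seededb (u : V) (t : nat) : bool :=
  [exists s : 'I_Tmax.+1, ((u, s) \in S) && (s == t :> nat)].

Lemma seededP u t : reflect (seeded S u t) (seededb u t).
Proof.
apply: (iffP existsP) => [[s /andP [Hs /eqP st]]|[s [Hs st]]]; exists s => //.
by rewrite Hs st eqxx.
Qed.

Definition infect_step (L : ilog V) (t : nat) (u : V) : option (V * nat) :=
  if seededb u t then Some (u, t) else
  if [pick v | e u v && (lam [set u; v] == t) && (t \in infectious_times delta (L v))]
    is Some v then Some (v, t) else None.

(* [log_upto t] records the infections that happen strictly before time [t]. *)
Fixpoint log_upto (t : nat) : ilog V :=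
  if t is t'.+1 then
    fun u => if log_upto t' u is Some p then Some p else infect_step (log_upto t') t' u
  else fun _ => None.

Definition infection_log : ilog V := log_upto Tmax.+1.

Lemma infect_step_time L t u x s : infect_step L t u = Some (x, s) -> s = t.
Proof.
rewrite /infect_step; case: seededb; first by case.
by case: pickP => [v _ []|].
Qed.

Lemma log_upto_lt t u x s : log_upto t u = Some (x, s) -> s < t.
Proof.
elim: t => [//|t IH] /=; case Lt: (log_upto t u) => [p|].
  by move=> [Ep]; rewrite Ep in Lt; apply: ltnW; apply: IH.
by move/infect_step_time => ->.
Qed.

Lemma log_upto_mono s t u p : s <= t -> log_upto s u = Some p -> log_upto t u = Some p.
Proof. by move/subnK => <-; elim: (t - s) => [//|d IH] /= /IH ->. Qed.

Lemma log_upto_birth t u x s : log_upto t u = Some (x, s) ->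
  log_upto s u = None /\ infect_step (log_upto s) s u = Some (x, s).
Proof.
elim: t => [//|t IH] /=; case Lt: (log_upto t u) => [p|].
  by move=> [Ep]; rewrite Ep in Lt; apply: IH.
by move=> H; have st := infect_step_time H; subst s.
Qed.

Lemma log_uptoE T t u x s : t <= T ->
  (log_upto t u = Some (x, s)) <-> (log_upto T u = Some (x, s) /\ s < t).
Proof.
move=> tT; split => [H|[H st]]; first by split; [apply: log_upto_mono H|apply: log_upto_lt H].
have [B1 B2] := log_upto_birth H.
by apply: (@log_upto_mono s.+1) => //=; rewrite B1.
Qed.

Lemma infectious_times_log_upto T t v : t <= T ->
  (t \in infectious_times delta (log_upto t v)) =
  (t \in infectious_times delta (log_upto T v)).
Proof.
move=> tT; case Lt: (log_upto t v) => [[x t0]|].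
  by rewrite ((log_uptoE _ _ _ tT).1 Lt).1.
case LT: (log_upto T v) => [[x t0]|] //=; rewrite mem_iota.
case: ltnP => //= t0t.
by have := (log_uptoE _ _ _ tT).2 (conj LT t0t); rewrite Lt.
Qed.

Lemma reason_le_Tmax L u t : reason e delta lam S L u t -> t <= Tmax.
Proof.
case=> [[s [_ <-]]|[v [euv [<- _]]]]; first by rewrite -ltnS.
exact: lam_le_Tmax.
Qed.

Lemma reason_infected u t : reason e delta lam S infection_log u t ->
  log_upto t.+1 u <> None.
Proof.
move=> R; have tT := reason_le_Tmax R; rewrite /=.
case: (log_upto t u) => [//|]; rewrite /infect_step.
case: seededP => [//|NS]; case: pickP => [//|none].
case: R => [//|[v [euv [lv /infectiousP inf]]]].
move: inf; rewrite -(@infectious_times_log_upto Tmax.+1) ?(leqW tT) // => inf.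
by have := none v; rewrite euv lv eqxx inf.
Qed.

Lemma infection_log_produces : produces e delta lam S infection_log.
Proof.
move=> u; case Lu: (infection_log u) => [[x t]|]; last first.
  move=> t R; have tT := reason_le_Tmax R.
  case Lt: (log_upto t.+1 u) (reason_infected R) => [p|] // _.
  by rewrite /infection_log (@log_upto_mono t.+1 Tmax.+1 _ _ tT Lt) in Lu.
have [B1 B2] := log_upto_birth Lu.
have tT : t <= Tmax.+1 by apply: ltnW; apply: log_upto_lt Lu.
split.
  move: B2; rewrite /infect_step; case: seededP => [Hs [<-]|_]; first by left.
  case: pickP => [v /andP [/andP [euv /eqP lv] inf]|_] // [vx]; subst v; right.
  split; first by move=> xu; subst x; rewrite e_irr in euv.
  do 2 (split => //); apply/infectiousP.
  by rewrite -(@infectious_times_log_upto Tmax.+1).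
move=> t' t't R.
case Lt': (log_upto t'.+1 u) (reason_infected R) => [p|] // _.
by rewrite (log_upto_mono t't Lt') in B1.
Qed.

End InfectionLog.

Lemma exists_iota_notin (s : seq nat) a b : size s < b -> exists2 j, j \in iota a b & j \notin s.
Proof.
move=> sb; case: (boolP (all (mem s) (iota a b))) => [/allP sub|/allPn [j ?]]; last by exists j.
by have := uniq_leq_size (iota_uniq a b) sub; rewrite size_iota leqNgt sb.
Qed.

Lemma size_flatten_map_leq (T U : Type) (f : T -> seq U) (s : seq T) b :
  (forall x, size (f x) <= b) -> size (flatten (map f s)) <= b * size s.
Proof.
move=> fb; elim: s => [|x s IH] //=.
by rewrite size_cat mulnS leq_add.
Qed.

Lemma exists_least_nat (P : nat -> Prop) n : P n -> exists m, P m /\ forall k, P k -> m <= k.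
Proof.
elim/ltn_ind: n => n IH Pn.
case: (classic (exists2 k, k < n & P k)) => [[k kn Pk]|none]; first exact: IH k kn Pk.
exists n; split => // k Pk; rewrite leqNgt; apply/negP => kn.
by apply: none; exists k.
Qed.

Lemma witness_complexity_exists (G : tgraph) k sched :
  witnessing G k sched -> exists m, witness_complexity G k m.
Proof.
move=> W; pose P m := exists s, witnessing G k s /\ size s = m.
have [m [[s [Ws <-]] least]] := @exists_least_nat P _ (ex_intro _ sched (conj W erefl)).
by exists (size s); split; [exists s | move=> s' Ws'; apply: least; exists s'].
Qed.

Section Star.
Variables (n delta : nat).
Local Notation V := 'I_n.+1.

Definition center : V := ord0.

Definition star_rel : rel V := fun u v => (u == center) (+) (v == center).

(* On the edge [{center, w}] this is the label [w]. *)
Definition star_label (A : {set V}) : nat := \max_(x in A) x.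

Definition star : tgraph := @TGraph V star_rel n.+1 delta star_label.

Lemma star_rel_sym : symmetric star_rel.
Proof. by move=> u v; rewrite /star_rel addbC. Qed.

Lemma star_rel_irr : irreflexive star_rel.
Proof. by move=> u; rewrite /star_rel addbb. Qed.

Lemma star_rel_center w : star_rel center w = (w != center).
Proof. by rewrite /star_rel eqxx. Qed.

Lemma star_relP u v : star_rel u v -> (u = center /\ v != center) \/ (v = center /\ u != center).
Proof.
rewrite /star_rel; case: (eqVneq u center) => [->|uc]; case: (eqVneq v center) => [->|vc] //= _.
- by left.
- by right.
Qed.

Lemma leaf_gt0 (w : V) : w != center -> 0 < w.
Proof. by rewrite lt0n; apply: contra => /eqP w0; apply/eqP/val_inj. Qed.

Lemma star_label_leaf w : star_label [set center; w] = w.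
Proof.
rewrite /star_label; case: (eqVneq w center) => [->|wc]; first by rewrite setUid big_set1.
by rewrite big_setU1 ?big_set1 ?inE 1?eq_sym //= max0n.
Qed.

Lemma star_label_leafC w : star_label [set w; center] = w.
Proof. by rewrite setUC star_label_leaf. Qed.

Lemma edges_star : edges star_rel = [set [set center; w] | w in [set~ center]].
Proof.
apply/setP => A; apply/idP/imsetP => [|[w]]; rewrite !inE.
  move=> /existsP [u /existsP [v /andP [euv /eqP ->]]].
  case/star_relP: euv => [[-> vc]|[-> uc]]; first by exists v; rewrite ?inE.
  by exists u; rewrite ?inE // setUC.
move=> wc ->; apply/existsP; exists center; apply/existsP; exists w.
by rewrite star_rel_center wc eqxx.
Qed.

Lemma card_edges_star : #|edges star_rel| = n.
Proof.
rewrite edges_star card_in_imset ?cardsC1 ?card_ord //.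
move=> v w; rewrite !inE => vc wc E.
have : v \in [set center; w] by rewrite -E set22.
by rewrite in_set2 (negbTE vc) => /eqP.
Qed.

Lemma star_label_edge u v : star_rel u v -> 0 < star_label [set u; v] <= n.
Proof.
case/star_relP => [[-> wc]|[-> wc]]; rewrite ?star_label_leaf ?star_label_leafC;
  by rewrite leaf_gt0 // -ltnS ltn_ord.
Qed.

Lemma star_label_valid : valid_labeling star_rel n.+1 star_label.
Proof.
move=> A; rewrite edges_star => /imsetP [w]; rewrite !inE => wc ->.
have /andP [pos le] : 0 < star_label [set center; w] <= n.
  by apply: star_label_edge; rewrite star_rel_center.
by rewrite pos leqW.
Qed.

Lemma star_valid : 0 < delta -> valid_tgraph star.
Proof.
move=> d0; split; first exact: star_rel_sym.
by split; [exact: star_rel_irr | split => //; exact: star_label_valid].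
Qed.

Definition center_seed (i : nat) : {set V * 'I_n.+2} := [set (center, inord i)].

Lemma seeded_center_seed i u t :
  i <= n.+1 -> seeded (center_seed i) u t <-> u = center /\ t = i.
Proof.
move=> ilt; split => [[s [/set1P [-> ->] <-]]|[-> ->]]; first by rewrite inordK.
by exists (inord i); rewrite set11 inordK.
Qed.

Lemma leaf_not_infectious_at_label (S : {set V * 'I_n.+2}) (L : ilog V) v :
  produces star_rel delta star_label S L -> v != center -> (forall t, ~ seeded S v t) ->
  ~ infectious delta L v v.
Proof.
move=> P vc NS /infectiousP; case Lv: (L v) => [[x t0]|] //=; rewrite mem_iota => /andP [lt _].
have [_ evx lvx _] := produces_unseeded P Lv (NS t0).
case/star_relP: evx => [[vc' _]|[xc _]]; first by rewrite vc' eqxx in vc.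
by move: lvx lt; rewrite xc star_label_leafC => ->; rewrite ltnn.
Qed.

Lemma center_infected_at_seed i (L : ilog V) : i <= n.+1 ->
  produces star_rel delta star_label (center_seed i) L -> exists x, L center = Some (x, i).
Proof.
move=> ilt P; case Lc: (L center) => [[x t]|]; last first.
  by have := P center; rewrite Lc => /(_ i); case; left; apply/seeded_center_seed.
exists x; case: (eqVneq t i) => [-> //|ti]; exfalso.
have NS : ~ seeded (center_seed i) center t.
  by move/(seeded_center_seed _ _ ilt) => [_ /eqP]; rewrite (negbTE ti).
have [_ ecx lcx inf] := produces_unseeded P Lc NS.
rewrite star_rel_center in ecx; rewrite star_label_leaf in lcx.
apply: (leaf_not_infectious_at_label P ecx) => [t' /(seeded_center_seed _ _ ilt) [xc _]|].
  by rewrite xc eqxx in ecx.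
by rewrite lcx.
Qed.

Lemma center_seed_reveals i (w : V) (L : ilog V) : 0 < delta -> w = i.+1 :> nat ->
  produces star_rel delta star_label (center_seed i) L -> L w = Some (center, nat_of_ord w).
Proof.
move=> d0 wi P; have ilt : i <= n.+1 by have := ltn_ord w; rewrite wi; lia.
have wc : w != center by apply/eqP => wc; rewrite wc in wi.
have NS t : ~ seeded (center_seed i) w t.
  by move/(seeded_center_seed _ _ ilt) => [wc' _]; rewrite wc' eqxx in wc.
case Lw: (L w) => [[y t]|].
  have [_ ewy lwy _] := produces_unseeded P Lw (NS t).
  case/star_relP: ewy => [[wc' _]|[yc _]]; first by rewrite wc' eqxx in wc.
  by rewrite yc -lwy yc star_label_leafC.
have [x Lc] := center_infected_at_seed ilt P.
have := P w; rewrite Lw => /(_ w); case; right; exists center.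
split; first by rewrite star_rel_sym star_rel_center.
split; first exact: star_label_leafC.
by apply/infectiousP; rewrite Lc /= mem_iota wi; lia.
Qed.

Definition star_schedule : seq {set V * 'I_n.+2} := mkseq center_seed n.

Lemma star_schedule_witnessing k : 0 < delta -> 0 < k -> witnessing star k star_schedule.
Proof.
move=> d0 k0; split; first by move=> S /mapP [i _ ->]; rewrite cards1.
move=> logs _ P lam' _ P' A; rewrite edges_star => /imsetP [w]; rewrite !inE => wc ->.
have wi : w = w.-1.+1 :> nat by rewrite prednK // leaf_gt0.
have i_lt_n : w.-1 < n by have := ltn_ord w; have := leaf_gt0 wc; lia.
have im : w.-1 < size star_schedule by rewrite size_mkseq.
have round : nth set0 star_schedule w.-1 = center_seed w.-1.
  by rewrite nth_mkseq.
have NS : ~ seeded (center_seed w.-1) w w.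
  by move/seeded_center_seed => /(_ (ltnW (leqW i_lt_n))) [wc' _]; rewrite wc' eqxx in wc.
have := P _ im; rewrite round => /(center_seed_reveals d0 wi) Lw.
have := P' _ im; rewrite round => P'w.
have [_ _ lw _] := produces_unseeded P'w Lw NS.
by rewrite /= star_label_leaf setUC.
Qed.

Lemma star_relabel_undetected (S : {set V * 'I_n.+2}) (L : ilog V) (w : V) l :
  w != center -> produces star_rel delta star_label S L ->
  (forall t, L center <> Some (w, t)) -> ~ infectious delta L center w ->
  ~ infectious delta L center l -> ~ infectious delta L w l ->
  produces star_rel delta (relabel star_label [set center; w] l) S L.
Proof.
move=> wc P Nc Icw Icl Iwl; apply: produces_relabel => // t Lw.
have [_ lwc inf] := produces_infected_by P Lw (not_eq_sym (elimN eqP wc)).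
by apply: Icw; rewrite -[X in infectious _ _ _ X](star_label_leafC w) lwc.
Qed.

(* Each log rules out at most [delta.+1] leaves (the infector of the center
   and the leaves the center can infect) and at most [2 * delta] labels (the
   times at which the center or the leaf is infectious). *)
Lemma star_fresh_edge m (logs : nat -> ilog V) : 0 < delta -> 2 * delta * m < n ->
  exists w l, [/\ w != center, 0 < l <= n.+1, l != w & forall i, i < m ->
    [/\ forall t, logs i center <> Some (w, t), ~ infectious delta (logs i) center w,
        ~ infectious delta (logs i) center l & ~ infectious delta (logs i) w l]].
Proof.
move=> d0 small.
pose src (p : option (V * nat)) := if p is Some (x, _) then [:: nat_of_ord x] else [::].
pose bad_leaves := flatten [seq src (logs i center) ++
  infectious_times delta (logs i center) | i <- iota 0 m].
have [j jin jnot] : exists2 j, j \in iota 1 n & j \notin bad_leaves.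
  apply: exists_iota_notin; apply: (leq_ltn_trans (size_flatten_map_leq (b := delta.+1) _ _)).
    move=> i; have := size_infectious_times delta (logs i center).
    by rewrite size_cat; case: (logs i center) => [[]|] /=; lia.
  by rewrite size_iota; nia.
have [j_gt0 j_le_n] : 0 < j /\ j <= n by move: jin; rewrite mem_iota; lia.
pose w : V := inord j.
have wj : w = j :> nat by rewrite inordK.
pose bad_labels := j :: flatten [seq infectious_times delta (logs i center) ++
  infectious_times delta (logs i w) | i <- iota 0 m].
have [l lin lnot] : exists2 l, l \in iota 1 n.+1 & l \notin bad_labels.
  apply: exists_iota_notin; rewrite /= ltnS.
  apply: (leq_ltn_trans (size_flatten_map_leq (b := 2 * delta) _ _)).
    by move=> i; rewrite size_cat mul2n -addnn leq_add ?size_infectious_times.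
  by rewrite size_iota.
have im i : i < m -> i \in iota 0 m by rewrite mem_iota.
exists w, l; split.
- by apply/eqP => /(congr1 val) /=; rewrite wj => j0; rewrite j0 in j_gt0.
- by move: lin; rewrite mem_iota; lia.
- by apply: contraNneq lnot => ->; rewrite wj inE eqxx.
- move=> i /im iin; split.
  + move=> t Lc; move/flatten_mapP: jnot; apply; exists i => //.
    by rewrite Lc mem_cat inE -wj eqxx.
  + move/infectiousP => inf; move/flatten_mapP: jnot; apply; exists i => //.
    by rewrite mem_cat -wj inf orbT.
  + move/infectiousP => inf; move: lnot; rewrite inE negb_or => /andP [_ /flatten_mapP].
    by apply; exists i => //; rewrite mem_cat inf.
  + move/infectiousP => inf; move: lnot; rewrite inE negb_or => /andP [_ /flatten_mapP].
    by apply; exists i => //; rewrite mem_cat inf orbT.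
Qed.

Lemma star_witnessing_lower k sched : 0 < delta ->
  witnessing star k sched -> n <= 2 * delta * size sched.
Proof.
move=> d0 [_ W]; rewrite leqNgt; apply/negP => small.
pose logs := mkseq (fun i => infection_log star_rel delta star_label (nth set0 sched i))
  (size sched).
pose log i := nth (fun _ => None) logs i.
have P i : i < size sched -> produces star_rel delta star_label (nth set0 sched i) (log i).
  move=> im; rewrite /log nth_mkseq //; apply: infection_log_produces.
    exact: star_rel_irr.
  by move=> u v /star_label_edge /andP [_ /leqW].
have [w [l [wc l_range lw fresh]]] := star_fresh_edge log d0 small.
pose lam' := relabel star_label [set center; w] l.
have P' i : i < size sched -> produces star_rel delta lam' (nth set0 sched i) (log i).
  by move=> im; have [] := fresh i im; apply: star_relabel_undetected (P i im).
have edge : [set center; w] \in edges star_rel.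
  by rewrite edges_star; apply/imsetP; exists w; rewrite ?inE.
have := W logs (size_mkseq _ _) P lam' (relabel_valid _ star_label_valid l_range) P' _ edge.
rewrite /lam' /relabel eqxx /= star_label_leaf => lw'.
by rewrite lw' eqxx in lw.
Qed.

End Star.

Theorem mainTheorem3 :
  exists (G : nat -> tgraph),
    (forall n, valid_tgraph (G n)) /\
    (forall M, exists n, M < #|edges (tE (G n))|) /\
    exists d, 0 < d /\
      forall k, 0 < k ->
        exists N, forall n, N <= n ->
          exists m, witness_complexity (G n) k m /\
                    #|edges (tE (G n))| <= d * m.
Proof.
exists (fun n => star n 1); split; first by move=> n; apply: star_valid.
split; first by move=> M; exists M.+1; rewrite card_edges_star.
exists 2; split => // k k0; exists 0 => n _.
have [m wc] := witness_complexity_exists (@star_schedule_witnessing n 1 k isT k0).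
exists m; split => //; have [[sched [W <-]] _] := wc.
by rewrite card_edges_star -(muln1 2) (@star_witnessing_lower n 1 k sched isT W).
Qed.
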